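(* Under the standing assumptions below, the group $(V,+)$ is characteristically simple, i.e. $V=S_1\oplus\dots\oplus S_n$ is a direct sum of pairwise isomorphic simple groups. In particular, if $V$ is abelian then $V\cong C_p^n$ is an elementary abelian $p$-group for some prime $p$, while if $V$ is non-abelian then $Z(V)=0$.
   Context: Skew left brace $(B,+,\circ)$: groups $(B,+)$, $(B,\circ)$ with $a\circ(b+c)=a\circ b-a+a\circ c$; $\lambda_a(b)=-a+a\circ b$, $\sigma_a(b)=-a+b+a$, $a*b=-a+a\circ b-b$. Ideal: normal subgroup $I$ of $(B,+)$, $\lambda_a(I)\subseteq I$ for all $a$, normal in $(B,\circ)$. $I*J$ = additive subgroup generated by $\{i*j\}$; $B^{(2)}=B*B$, $B^{(3)}=B^{(2)}*B$. Standing assumptions: $B$ is a finite skew left brace and $X\subseteq B$ with $|X|\ge3$ and $\lambda_a(X)=X$, $\sigma_a(X)=X$ for all $a\in B$; $B$ is additively generated by $X$; the ideal $V$ generated by $\{x-y:x,y\in X\}$ is the smallest non-zero ideal of $B$ (contained in every non-zero ideal); the quotient $B/V$ is a trivial skew left brace (its two operations coincide) with cyclic additive group; the group $\{\sigma_a\lambda_b|_X:a,b\in V\}$ acts transitively on $X$; and $B^{(3)}=0$. *)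

(* A finite skew left brace (B,+,o) is encoded with the
   additive group (B,+) as a finGroupType gT (written multiplicatively in
   MathComp: a + b is a * b, -a is a^-1, 0 is 1) and the circle group
   (B,o) given by explicit operations circ / cinv / cone with group axioms. *)
From HB Require Import structures.
From mathcomp Require Import all_boot all_fingroup all_solvable.
Set Implicit Arguments. Unset Strict Implicit. Unset Printing Implicit Defensive.
Import GroupScope.
Local Open Scope group_scope.

Section SkewBrace.
Variable gT : finGroupType.
Variables (circ : gT -> gT -> gT) (cinv : gT -> gT) (cone : gT).

Definition is_skew_brace : Prop :=
  [/\ forall a b c, circ a (circ b c) = circ (circ a b) c,
      forall a, circ cone a = a /\ circ a cone = a,
      forall a, circ (cinv a) a = cone /\ circ a (cinv a) = cone &
      forall a b c, circ a (b * c) = circ a b * a^-1 * circ a c].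

Definition lam (a b : gT) : gT := a^-1 * circ a b.
Definition sig (a b : gT) : gT := a^-1 * b * a.
Definition bstar (a b : gT) : gT := a^-1 * circ a b * b^-1.

Definition is_ideal (I : {set gT}) : bool :=
  [&& group_set I, I <| [set: gT],
      [forall a, forall i in I, lam a i \in I],
      cone \in I, [forall i in I, forall j in I, circ i j \in I],
      [forall i in I, cinv i \in I] &
      [forall a, forall i in I, circ (circ a i) (cinv a) \in I]].

Definition ideal_gen (S : {set gT}) : {set gT} :=
  \bigcap_(I : {set gT} | is_ideal I && (S \subset I)) I.

Definition brace_prod (I J : {set gT}) : {set gT} :=
  <<[set bstar i j | i in I, j in J]>>.

Definition diffset (X : {set gT}) : {set gT} := [set x * y^-1 | x in X, y in X].

End SkewBrace.

(* Since B^(2) is an ideal, minimality of V and B^(3) = 0 force V * B = 0.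
   For an additively normal, lambda-invariant subgroup H of V this makes H an
   ideal.  A characteristic subgroup of V has both properties, because V is
   normal in (B,+) and each lambda_a restricts to an automorphism of V; so by
   minimality V has no proper non-trivial characteristic subgroup. *)
From HB Require Import structures.
From mathcomp Require Import all_boot all_fingroup all_solvable.
Set Implicit Arguments. Unset Strict Implicit. Unset Printing Implicit Defensive.
Import GroupScope.
Local Open Scope group_scope.

Lemma conj_sub_norm (gT : finGroupType) (A : {set gT}) c :
  A :^ c \subset A -> c \in 'N(A).
Proof. by move=> sAcA; apply/normP/eqP; rewrite eqEcard sAcA cardJg /=. Qed.

Lemma charsimple_abelian_abelem (gT : finGroupType) (G : {group gT}) :
  charsimple G -> abelian G -> exists2 p, prime p & p.-abelem G.
Proof.
move=> csG abG; exists (pdiv #|G|); last exact: charsimple_solvable (abelian_sol abG).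
by rewrite pdiv_prime // cardG_gt1; case/charsimpleP: csG.
Qed.

Lemma charsimple_nonabelian_center1 (gT : finGroupType) (G : {group gT}) :
  charsimple G -> ~~ abelian G -> 'Z(G) = 1.
Proof.
case/charsimpleP=> _ csG nabG; apply/eqP; apply: contraR nabG => ntZ.
by rewrite -(csG _ ntZ (center_char G)) center_abelian.
Qed.

Section SkewBraceIdeals.

Variables (gT : finGroupType) (circ : gT -> gT -> gT) (cinv : gT -> gT) (cone : gT).
Hypothesis hB : is_skew_brace circ cinv cone.

Lemma circ1 a : circ a 1 = a.
Proof.
have [_ _ _ circD] := hB; have := circD a 1 1; rewrite mulg1 -{1}[circ a 1]mulg1 -mulgA.
by move/mulgI/esym/eqP; rewrite -eq_mulVg1 => /eqP.
Qed.

Lemma cone1 : cone = 1.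
Proof. by have [_ circ_id _ _] := hB; have [<- _] := circ_id 1; rewrite circ1. Qed.

Lemma cinvKcirc a x : circ (cinv a) (circ a x) = x.
Proof.
have [circA circ_id circ_inv _] := hB.
by rewrite circA; have [-> _] := circ_inv a; have [-> _] := circ_id x.
Qed.

Lemma circ_lam a b : circ a b = a * lam circ a b.
Proof. by rewrite /lam mulKVg. Qed.

Lemma lamM a : {morph lam circ a : x y / x * y}.
Proof. by move=> x y; have [_ _ _ circD] := hB; rewrite /lam circD !mulgA. Qed.

Lemma lam1 a : lam circ a 1 = 1.
Proof. by rewrite /lam circ1 mulVg. Qed.

Lemma lamV a : {morph lam circ a : x / x^-1}.
Proof. by move=> x; apply: (mulgI (lam circ a x)); rewrite -lamM !mulgV lam1. Qed.

Lemma lam_inj a : injective (lam circ a).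
Proof. by move=> x y /mulgI eq_xy; rewrite -(cinvKcirc a x) eq_xy cinvKcirc. Qed.

Lemma lam_circ a b c : lam circ (circ a b) c = lam circ a (lam circ b c).
Proof.
have [circA _ _ _] := hB.
by rewrite [lam circ b c]/lam lamM lamV /lam circA invMg invgK !mulgA mulgK.
Qed.

Lemma lam_cinv a : lam circ a (cinv a) = a^-1.
Proof. by have [_ _ circ_inv _] := hB; rewrite /lam; have [_ ->] := circ_inv a; rewrite cone1 mulg1. Qed.

Lemma lam_cinvK a : cancel (lam circ a) (lam circ (cinv a)).
Proof.
move=> x; rewrite -lam_circ; have [_ _ circ_inv _] := hB; have [-> _] := circ_inv a.
by rewrite cone1 /lam invg1 mul1g -cone1; have [_ circ_id _ _] := hB; case: (circ_id x).
Qed.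

Definition lam_morphism (D : {group gT}) a : {morphism D >-> gT} :=
  @Morphism gT gT D (lam circ a) (in2W (lamM a)).

Lemma injm_lam (D : {group gT}) a : 'injm (lam_morphism D a).
Proof. by apply/injmP=> x y _ _ /lam_inj. Qed.

Definition strong_left_ideal (I : {set gT}) : Prop :=
  [/\ group_set I, [set: gT] \subset 'N(I)
    & forall a x, x \in I -> lam circ a x \in I].

Lemma ideal_strong_left I : is_ideal circ cinv cone I -> strong_left_ideal I.
Proof.
case/and5P=> gI /andP[_ nI] lamI _ _; split=> // a x.
by move/forallP/(_ a)/forall_inP: lamI; apply.
Qed.

Lemma ideal_gen_strong_left S : strong_left_ideal (ideal_gen circ cinv cone S).
Proof.
have idealS I : is_ideal circ cinv cone I && (S \subset I) -> strong_left_ideal I.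
  by case/andP=> /ideal_strong_left.
split.
- apply/group_setP; split=> [|x y].
    by apply/bigcapP=> I /idealS[gI _ _]; rewrite (group1 (Group gI)).
  move=> /bigcapP Vx /bigcapP Vy; apply/bigcapP=> I I_S.
  by have [gI _ _] := idealS I I_S; exact: (groupM (G := Group gI) (Vx I I_S) (Vy I I_S)).
- apply/subsetP=> c _; apply: conj_sub_norm; apply/subsetP=> _ /imsetP[x /bigcapP Vx ->].
  apply/bigcapP=> I I_S; have [gI nI _] := idealS I I_S.
  by rewrite memJ_norm ?Vx // (subsetP nI) ?inE.
- move=> a x /bigcapP Vx; apply/bigcapP=> I I_S.
  by have [_ _ lamI] := idealS I I_S; apply: lamI; exact: Vx.
Qed.

Lemma strong_left_ideal_is_ideal I :
  strong_left_ideal I -> (forall x b, x \in I -> bstar circ x b \in I) ->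
  is_ideal circ cinv cone I.
Proof.
case=> gI nI lamI starI; have I1 := group1 (Group gI).
have IM x y : x \in I -> y \in I -> x * y \in I by apply: (groupM (G := Group gI)).
have IV x : x \in I -> x^-1 \in I by apply: (groupVr (G := Group gI)).
have IJ x c : x \in I -> x ^ c \in I.
  by move=> Ix; rewrite memJ_norm // (subsetP nI) ?inE.
apply/and5P; split=> //; first by rewrite /normal subsetT.
- by apply/forallP=> a; apply/forall_inP; apply: lamI.
- by rewrite cone1.
apply/and3P; split.
- by apply/forall_inP=> i Ii; apply/forall_inP=> j Ij; rewrite circ_lam IM ?lamI.
- by apply/forall_inP=> i Ii; rewrite -(lam_cinvK i (cinv i)) lam_cinv lamI ?IV.
apply/forallP=> a; apply/forall_inP=> i Ii.
have -> : circ (circ a i) (cinv a)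
    = (lam circ a i * lam circ a (bstar circ i (cinv a))) ^ a^-1.
  rewrite circ_lam lam_circ circ_lam.
  have -> : lam circ i (cinv a) = bstar circ i (cinv a) * cinv a by rewrite mulgKV.
  by rewrite lamM lam_cinv /conjg invgK !mulgA.
by rewrite IJ // IM ?lamI ?starI.
Qed.

Lemma ideal_brace_square :
  is_ideal circ cinv cone (brace_prod circ [set: gT] [set: gT]).
Proof.
rewrite /brace_prod; set S := [set bstar circ _ _ | _ in _, _ in _].
have S_star a b : bstar circ a b \in S by apply: imset2_f; rewrite inE.
apply: strong_left_ideal_is_ideal => [|x b _]; last exact: mem_gen.
split; first exact: group_set_generated.
- apply/subsetP=> c _; apply: conj_sub_norm; rewrite -genJ gen_subG.
  apply/subsetP=> _ /imsetP[_ /imset2P[a d _ _ ->] ->].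
  have -> : bstar circ a d ^ c = (bstar circ a c^-1)^-1 * bstar circ a (c^-1 * d).
    by rewrite /bstar -!/(lam circ _ _) lamM lamV /conjg !invMg !invgK !mulgA !mulgK.
  by rewrite groupM ?groupV ?mem_gen.
- move=> a x Sx; have := mem_morphim (lam_morphism [set: gT] a) (in_setT x) Sx.
  rewrite morphim_gen ?subsetT // morphimEsub ?subsetT //; apply: subsetP.
  rewrite genS //; apply/subsetP=> _ /imsetP[_ /imset2P[b d _ _ ->] ->] /=.
  have -> : lam circ a (bstar circ b d)
      = bstar circ (circ (circ a b) (cinv a)) (lam circ a d).
    by rewrite /bstar -!/(lam circ _ _) !lam_circ lam_cinvK lamM lamV.
  exact: S_star.
Qed.

Section MinimalIdeal.

Variable V : {group gT}.
Hypothesis V_strong_left : strong_left_ideal V.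
Hypothesis V_min :
  forall I : {set gT}, is_ideal circ cinv cone I -> I != 1 -> V \subset I.
Hypothesis B3_trivial :
  brace_prod circ (brace_prod circ [set: gT] [set: gT]) [set: gT] = 1.

Lemma minimal_ideal_star1 v b : v \in V -> bstar circ v b = 1.
Proof.
move=> Vv; set B2 := brace_prod circ [set: gT] [set: gT].
have star_mem (I J : {set gT}) x y :
  x \in I -> y \in J -> bstar circ x y \in brace_prod circ I J.
  by move=> Ix Jy; apply/mem_gen/imset2_f.
have [B2_1 | ntB2] := eqVneq B2 1.
  by have := star_mem _ _ v b (in_setT v) (in_setT b); rewrite -/B2 B2_1 inE => /eqP.
have B2v : v \in B2 by rewrite (subsetP (V_min ideal_brace_square ntB2)).
by have := star_mem _ _ v b B2v (in_setT b); rewrite B3_trivial inE => /eqP.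
Qed.

Lemma char_minimal_ideal (H : {group gT}) : H \char V -> is_ideal circ cinv cone H.
Proof.
move=> chH; have [_ nV lamV] := V_strong_left; have sHV := char_sub chH.
apply: strong_left_ideal_is_ideal => [|x b Hx]; last first.
  by rewrite minimal_ideal_star1 ?group1 ?(subsetP sHV).
split; [exact: groupP | exact: char_norm_trans nV |] => a x Hx.
have lamVV : lam_morphism V a @* V = V.
  apply/eqP; rewrite eqEcard morphimEsub // card_in_imset.
    by rewrite leqnn andbT; apply/subsetP=> _ /imsetP[y Vy ->]; apply: lamV.
  by move=> y z _ _ /lam_inj.
have [_ /(_ (lam_morphism V a) (injm_lam V a) lamVV) lamHH] := charP _ _ chH.
by have := mem_morphim (lam_morphism V a) (subsetP sHV x Hx) Hx; rewrite lamHH.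
Qed.

Lemma minimal_ideal_charsimple : V :!=: 1 -> charsimple V.
Proof.
move=> ntV; apply/charsimpleP; split=> // H ntH chH.
by apply/eqP; rewrite eqEsubset char_sub // V_min // char_minimal_ideal.
Qed.

End MinimalIdeal.

End SkewBraceIdeals.

Unset Implicit Arguments.
Theorem lemma5p3 (gT : finGroupType) (circ : gT -> gT -> gT) (cinv : gT -> gT)
    (cone : gT) (hB : is_skew_brace circ cinv cone)
    (X : {set gT}) (hX3 : 3 <= #|X|)
    (hXlam : forall a, [set lam circ a x | x in X] = X)
    (hXsig : forall a, [set sig a x | x in X] = X)
    (hXgen : <<X>> = [set: gT])
    (V : {set gT}) (hVdef : V = ideal_gen circ cinv cone (diffset X))
    (hVnz : V != 1)
    (hVmin : forall I : {set gT}, is_ideal circ cinv cone I -> I != 1 -> V \subset I)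
    (hVtriv : forall a b, coset V (circ a b) = coset V (a * b))
    (hVcyc : cyclic ([set: gT] / V))
    (htrans : forall x y, x \in X -> y \in X ->
       exists2 a, a \in V & exists2 b, b \in V & sig a (lam circ b x) = y)
    (h3 : brace_prod circ (brace_prod circ [set: gT] [set: gT]) [set: gT] = 1) :
  charsimple V /\
  (abelian V -> exists2 p, prime p & p.-abelem V) /\
  (~~ abelian V -> 'Z(V) = 1).
Proof.
have V_strong_left := ideal_gen_strong_left circ cinv cone (diffset X).
rewrite -hVdef in V_strong_left; have [gV _ _] := V_strong_left.
pose VG := Group gV; have -> : V = VG by [].
have csV : charsimple VG.
  exact: (@minimal_ideal_charsimple _ _ _ _ hB VG V_strong_left hVmin h3 hVnz).
split=> //; split; [exact: charsimple_abelian_abelem | exact: charsimple_nonabelian_center1].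
Qed.
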